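(* Let $(G,\mathcal{P})$ and $(H,\mathcal{Q})$ be group pairs. (i) If $q\colon(G,\mathcal{P})\to(H,\mathcal{Q})$ is a quasi-isometry of pairs such that the projections $\dot q\to G/\mathcal{P}$ and $\dot q\to H/\mathcal{Q}$ are bijective, then $(G,\mathcal{P})$ and $(H,\mathcal{Q})$ are strongly quasi-isometric. (ii) If $(G,\mathcal{P})$ and $(H,\mathcal{Q})$ are strongly quasi-isometric, then they are quasi-isometric (i.e. there is a quasi-isometry of pairs between them).
   Context: A group pair $(G,\mathcal{P})$: $G$ finitely generated with a word metric for a finite generating set, $\mathcal{P}$ a non-empty finite collection of subgroups (repetitions allowed); $G/\mathcal{P}=\coprod_{P\in\mathcal{P}}G/P$, elements viewed as cosets (subsets of $G$). $f$ is $(L,C)$-Lipschitz if $d(f(x),f(x'))\le L\,d(x,x')+C$. Fix $L\ge1,C\ge0,M\ge0$. For $q\colon G\to H$ let $\dot q=\{(A,B)\in G/\mathcal{P}\times H/\mathcal{Q}: \text{Hausdorff distance in }H\text{ between }q(A)\text{ and }B\text{ is }<M\}$. An $(L,C,M)$-quasi-isometry of pairs is an $(L,C)$-quasi-isometry $q\colon G\to H$ such that both projections $\dot q\to G/\mathcal{P}$, $\dot q\to H/\mathcal{Q}$ are surjective. An $(L,C,M)$-Lipschitz map of pairs $f=(f_1,f_2)\colon(G,\mathcal{P})\to(H,\mathcal{Q})$ is an $(L,C)$-Lipschitz $f_1\colon G\to H$ and a function $f_2\colon G/\mathcal{P}\to H/\mathcal{Q}$ with Hausdorff distance between $f_1(A)$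 and $f_2(A)$ less than $M$ for all $A$. $(f,r)$ is an $(L,C,M)$-quasi-retraction of pairs if $f\colon(G,\mathcal{P})\to(H,\mathcal{Q})$, $r\colon(H,\mathcal{Q})\to(G,\mathcal{P})$ are such maps with $d_G(r_1f_1(g),g)\le C$ for all $g$ and $r_2\circ f_2=\mathrm{id}$. $f$ is a strong $(L,C,M)$-quasi-isometry of pairs if there is an $(L,C,M)$-Lipschitz map of pairs $r$ with $(f,r)$ and $(r,f)$ both $(L,C,M)$-quasi-retractions. Pairs are (strongly) quasi-isometric if such maps exist for some constants $L,C,M$. *)

From Stdlib Require Import Reals List ClassicalEpsilon.
From Coquelicot Require Import Rbar Lub.
Open Scope R_scope.

Record grp := Grp {
  gcar :> Type;
  gmul : gcar -> gcar -> gcar;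
  ginv : gcar -> gcar;
  gone : gcar;
  gmulA : forall x y z, gmul x (gmul y z) = gmul (gmul x y) z;
  gmul1 : forall x, gmul gone x = x;
  gmulV : forall x, gmul (ginv x) x = gone }.

Definition is_subgroup (G : grp) (P : G -> Prop) : Prop :=
  P (gone G) /\ (forall x y, P x -> P y -> P (gmul G x y)) /\
  (forall x, P x -> P (ginv G x)).

(** Words over a finite generating set S (letters are generators or their
    inverses; the boolean flags an inverse). *)
Fixpoint word_prod (G : grp) (w : list (bool * G)) : G :=
  match w with
  | nil => gone G
  | (b, s) :: w' => gmul G (if b then ginv G s else s) (word_prod G w')
  end.

Definition word_le (G : grp) (S : list G) (x : G) (n : nat) : Prop :=
  exists w : list (bool * G), Forall (fun p => In (snd p) S) w /\
    (length w <= n)%nat /\ word_prod G w = x.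

Definition generates (G : grp) (S : list G) : Prop :=
  forall x : G, exists n, word_le G S x n.

Definition wlen (G : grp) (S : list G) (x : G) : nat :=
  epsilon (inhabits 0%nat)
    (fun n => word_le G S x n /\ forall m, word_le G S x m -> (n <= m)%nat).

Definition wdist (G : grp) (S : list G) (x y : G) : nat :=
  wlen G S (gmul G (ginv G x) y).

(** Group pairs: finitely generated group with a fixed finite generating
    set, and a non-empty finite family P_0, ..., P_{n-1} of subgroups
    (repetitions allowed). *)
Record gpair := GPair {
  gp_grp :> grp;
  gp_gens : list gp_grp;
  gp_gen : generates gp_grp gp_gens;
  gp_n : nat;
  gp_npos : (0 < gp_n)%nat;
  gp_sub : nat -> gp_grp -> Prop;
  gp_subP : forall i, (i < gp_n)%nat -> is_subgroup gp_grp (gp_sub i) }.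

Definition dist (X : gpair) (x y : X) : R := INR (wdist X (gp_gens X) x y).

Definition lcoset (G : grp) (g : G) (P : G -> Prop) : G -> Prop :=
  fun x => P (gmul G (ginv G g) x).

(** G/P = disjoint union over i < n of G/P_i: elements are tagged cosets. *)
Definition is_coset (X : gpair) (c : nat * (X -> Prop)) : Prop :=
  (fst c < gp_n X)%nat /\ exists g : X, snd c = lcoset X g (gp_sub X (fst c)).

Definition cosets (X : gpair) : Type := { c : nat * (X -> Prop) | is_coset X c }.

Definition cset (X : gpair) (A : cosets X) : X -> Prop := snd (proj1_sig A).

Definition img {A B : Type} (f : A -> B) (S : A -> Prop) : B -> Prop :=
  fun b => exists a, S a /\ f a = b.

Definition pdist (X : gpair) (a : X) (B : X -> Prop) : Rbar :=
  Rbar_glb (fun r => exists b, B b /\ r = Finite (dist X a b)).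

Definition rbar_max (x y : Rbar) : Rbar :=
  if Rbar_le_dec x y then y else x.

Definition hdist (X : gpair) (A B : X -> Prop) : Rbar :=
  rbar_max (Rbar_lub (fun r => exists a, A a /\ r = pdist X a B))
           (Rbar_lub (fun r => exists b, B b /\ r = pdist X b A)).

Definition haus_lt (X : gpair) (A B : X -> Prop) (M : R) : Prop :=
  Rbar_lt (hdist X A B) (Finite M).

Definition lipschitz (X Y : gpair) (L C : R) (f : X -> Y) : Prop :=
  forall x x', dist Y (f x) (f x') <= L * dist X x x' + C.

Definition quasi_isometry (X Y : gpair) (L C : R) (q : X -> Y) : Prop :=
  (forall x x', dist X x x' / L - C <= dist Y (q x) (q x') /\
                dist Y (q x) (q x') <= L * dist X x x' + C) /\
  (forall y : Y, exists x : X, dist Y (q x) y <= C).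

Definition qdot (X Y : gpair) (M : R) (q : X -> Y) (A : cosets X) (B : cosets Y) : Prop :=
  haus_lt Y (img q (cset X A)) (cset Y B) M.

Definition qi_pairs (X Y : gpair) (L C M : R) (q : X -> Y) : Prop :=
  quasi_isometry X Y L C q /\
  (forall A, exists B, qdot X Y M q A B) /\
  (forall B, exists A, qdot X Y M q A B).

Definition lip_map_pairs (X Y : gpair) (L C M : R) (f1 : X -> Y)
  (f2 : cosets X -> cosets Y) : Prop :=
  lipschitz X Y L C f1 /\
  forall A, haus_lt Y (img f1 (cset X A)) (cset Y (f2 A)) M.

Definition quasi_retraction (X Y : gpair) (L C M : R)
  (f1 : X -> Y) (f2 : cosets X -> cosets Y)
  (r1 : Y -> X) (r2 : cosets Y -> cosets X) : Prop :=
  lip_map_pairs X Y L C M f1 f2 /\ lip_map_pairs Y X L C M r1 r2 /\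
  (forall g, dist X (r1 (f1 g)) g <= C) /\
  (forall A, r2 (f2 A) = A).

Definition good_consts (L C M : R) : Prop := 1 <= L /\ 0 <= C /\ 0 <= M.

Definition strong_qi_pairs (X Y : gpair) (L C M : R)
  (f1 : X -> Y) (f2 : cosets X -> cosets Y) : Prop :=
  exists (r1 : Y -> X) (r2 : cosets Y -> cosets X),
    quasi_retraction X Y L C M f1 f2 r1 r2 /\
    quasi_retraction Y X L C M r1 r2 f1 f2.

Definition strongly_qi (X Y : gpair) : Prop :=
  exists L C M f1 f2, good_consts L C M /\ strong_qi_pairs X Y L C M f1 f2.

Definition qi (X Y : gpair) : Prop :=
  exists L C M q, good_consts L C M /\ qi_pairs X Y L C M q.

(* (i) Choosing for every y some r y with d(q(r y), y) <= C gives a Lipschitz quasi-inverse r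
   of q, and r carries a coset B Hausdorff-close to q(A) to a set Hausdorff-close to A.
   Bijectivity of both projections of q-dot makes q-dot the graph of a bijection of cosets,
   whose inverse serves as the coset part of r.
   (ii) If r is Lipschitz and r o f is C-close to the identity, then
   d(x, x') <= d(r(f x), r(f x')) + 2C bounds f from below, so f is a quasi-isometry; q-dot
   is onto the cosets of H because f2 o r2 = id. *)
From Stdlib Require Import Reals List ClassicalEpsilon Classical Wf_nat Lra Lia.
From Coquelicot Require Import Rcomplements Rbar Lub.
(* Last, so that [dist] is the word metric of Defs rather than the one of Stdlib's Reals. *)
From Pilot Require Import Defs.
Open Scope R_scope.

Section Group.
Variable G : grp.

Lemma gmulV_r x : gmul G x (ginv G x) = gone G.
Proof.
  assert (H : gmul G (ginv G x) (gmul G x (ginv G x)) = ginv G x)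
    by (rewrite gmulA, gmulV, gmul1; reflexivity).
  transitivity (gmul G (gmul G (ginv G (ginv G x)) (ginv G x)) (gmul G x (ginv G x))).
  - rewrite gmulV, gmul1. reflexivity.
  - rewrite <- gmulA, H. apply gmulV.
Qed.

Lemma gmul1_r x : gmul G x (gone G) = x.
Proof.
  transitivity (gmul G x (gmul G (ginv G x) x)).
  - rewrite gmulV; reflexivity.
  - rewrite gmulA, gmulV_r, gmul1; reflexivity.
Qed.

Lemma ginv_unique x y : gmul G y x = gone G -> y = ginv G x.
Proof.
  intro H. transitivity (gmul G y (gmul G x (ginv G x))).
  - rewrite gmulV_r, gmul1_r; reflexivity.
  - rewrite gmulA, H, gmul1; reflexivity.
Qed.

Lemma ginvM a b : ginv G (gmul G a b) = gmul G (ginv G b) (ginv G a).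
Proof.
  symmetry; apply ginv_unique.
  rewrite <- gmulA, (gmulA G (ginv G a) a b), gmulV, gmul1, gmulV. reflexivity.
Qed.

Lemma ginvK a : ginv G (ginv G a) = a.
Proof. symmetry; apply ginv_unique, gmulV_r. Qed.

Lemma word_prod_app w1 w2 :
  word_prod G (w1 ++ w2) = gmul G (word_prod G w1) (word_prod G w2).
Proof.
  induction w1 as [|[b s] w1 IH]; simpl.
  - rewrite gmul1; reflexivity.
  - rewrite IH, gmulA; reflexivity.
Qed.

Definition word_inv (w : list (bool * G)) : list (bool * G) :=
  rev (map (fun p => (negb (fst p), snd p)) w).

Lemma word_prod_inv w : word_prod G (word_inv w) = ginv G (word_prod G w).
Proof.
  induction w as [|[b s] w IH]; unfold word_inv in *; simpl.
  - apply ginv_unique, gmul1.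
  - rewrite word_prod_app, IH. simpl.
    rewrite gmul1_r, ginvM. f_equal. destruct b; simpl; [|reflexivity].
    rewrite ginvK; reflexivity.
Qed.

Variable S : list G.
Hypothesis S_gen : generates G S.

Lemma wlen_spec x : word_le G S x (wlen G S x) /\
  forall m, word_le G S x m -> (wlen G S x <= m)%nat.
Proof.
  unfold wlen. apply epsilon_spec.
  destruct (dec_inh_nat_subset_has_unique_least_element (word_le G S x))
    as [n [[Hn Hmin] _]].
  - intro n; apply classic.
  - apply S_gen.
  - exists n; split; assumption.
Qed.

Lemma wlen_ginv_le x : (wlen G S (ginv G x) <= wlen G S x)%nat.
Proof.
  destruct (wlen_spec x) as [[w [Hw [Hlen Hprod]]] _].
  apply (proj2 (wlen_spec (ginv G x))).
  exists (word_inv w). split; [|split].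
  - apply Forall_rev, Forall_map, Hw.
  - unfold word_inv. rewrite length_rev, length_map. exact Hlen.
  - rewrite word_prod_inv, Hprod. reflexivity.
Qed.

Lemma wlen_ginv x : wlen G S (ginv G x) = wlen G S x.
Proof.
  apply Nat.le_antisymm; [apply wlen_ginv_le|].
  rewrite <- (ginvK x) at 1. apply wlen_ginv_le.
Qed.

Lemma wlen_gmul a b : (wlen G S (gmul G a b) <= wlen G S a + wlen G S b)%nat.
Proof.
  destruct (wlen_spec a) as [[w1 [Hw1 [Hlen1 Hprod1]]] _].
  destruct (wlen_spec b) as [[w2 [Hw2 [Hlen2 Hprod2]]] _].
  apply (proj2 (wlen_spec _)).
  exists (w1 ++ w2). split; [|split].
  - apply Forall_app; split; assumption.
  - rewrite length_app; lia.
  - rewrite word_prod_app, Hprod1, Hprod2; reflexivity.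
Qed.

End Group.

Lemma dist_sym (X : gpair) (x y : X) : dist X x y = dist X y x.
Proof.
  unfold dist, wdist. f_equal.
  rewrite <- (wlen_ginv X _ (gp_gen X)), ginvM, ginvK. reflexivity.
Qed.

Lemma dist_triangle (X : gpair) (x y z : X) : dist X x z <= dist X x y + dist X y z.
Proof.
  unfold dist. rewrite <- plus_INR. apply le_INR. unfold wdist.
  replace (gmul X (ginv X x) z) with
    (gmul X (gmul X (ginv X x) y) (gmul X (ginv X y) z)).
  - apply wlen_gmul, gp_gen.
  - rewrite <- gmulA, (gmulA X y (ginv X y) z), gmulV_r, gmul1; reflexivity.
Qed.

Lemma Rbar_glb_spec E : Rbar_is_glb E (Rbar_glb E).
Proof. exact (proj2_sig (Rbar_ex_glb E)). Qed.

Lemma Rbar_lub_spec E : Rbar_is_lub E (Rbar_lub E).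
Proof. exact (proj2_sig (Rbar_ex_lub E)). Qed.

Lemma rbar_max_l x y : Rbar_le x (rbar_max x y).
Proof.
  unfold rbar_max; destruct (Rbar_le_dec x y); [assumption|apply Rbar_le_refl].
Qed.

Lemma rbar_max_r x y : Rbar_le y (rbar_max x y).
Proof.
  unfold rbar_max; destruct (Rbar_le_dec x y); [apply Rbar_le_refl|].
  apply Rbar_lt_le, Rbar_not_le_lt; assumption.
Qed.

Lemma pdist_lt (X : gpair) a B M :
  Rbar_lt (pdist X a B) (Finite M) -> exists b, B b /\ dist X a b < M.
Proof.
  intro H. apply NNPP; intro Hfar.
  apply (Rbar_lt_not_le _ _ H), (proj2 (Rbar_glb_spec _)).
  intros r [b [Hb ->]]. simpl. apply Rnot_lt_le. intro Hlt. apply Hfar; eauto.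
Qed.

Lemma pdist_le (X : gpair) a B K :
  (exists b, B b /\ dist X a b <= K) -> Rbar_le (pdist X a B) (Finite K).
Proof.
  intros [b [Hb Hd]].
  eapply Rbar_le_trans; [apply (proj1 (Rbar_glb_spec _)); eauto|exact Hd].
Qed.

Lemma haus_lt_near_l (X : gpair) (A B : X -> Prop) M :
  haus_lt X A B M -> forall a, A a -> exists b, B b /\ dist X a b < M.
Proof.
  intros H a Ha. apply pdist_lt.
  eapply Rbar_le_lt_trans; [|eapply Rbar_le_lt_trans; [apply rbar_max_l|exact H]].
  apply (proj1 (Rbar_lub_spec _)); eauto.
Qed.

Lemma haus_lt_near_r (X : gpair) (A B : X -> Prop) M :
  haus_lt X A B M -> forall b, B b -> exists a, A a /\ dist X b a < M.
Proof.
  intros H b Hb. apply pdist_lt.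
  eapply Rbar_le_lt_trans; [|eapply Rbar_le_lt_trans; [apply rbar_max_r|exact H]].
  apply (proj1 (Rbar_lub_spec _)); eauto.
Qed.

Lemma haus_lt_of_near (X : gpair) (A B : X -> Prop) K M :
  (forall a, A a -> exists b, B b /\ dist X a b <= K) ->
  (forall b, B b -> exists a, A a /\ dist X b a <= K) ->
  K < M -> haus_lt X A B M.
Proof.
  intros HA HB HK. unfold haus_lt, hdist.
  apply Rbar_le_lt_trans with (Finite K); [|exact HK].
  unfold rbar_max. destruct Rbar_le_dec as [_|_]; apply (proj2 (Rbar_lub_spec _));
    intros r [x [Hx ->]]; apply pdist_le; auto.
Qed.

Lemma haus_lt_weaken (X : gpair) (A B : X -> Prop) M M' :
  haus_lt X A B M -> M <= M' -> haus_lt X A B M'.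
Proof. intros H HM. eapply Rbar_lt_le_trans; [exact H|exact HM]. Qed.

Section QuasiInverse.
Variables (X Y : gpair) (L C : R) (q : X -> Y) (r : Y -> X).
Hypothesis L_ge1 : 1 <= L.
Hypothesis C_ge0 : 0 <= C.
Hypothesis q_qi : quasi_isometry X Y L C q.
Hypothesis qr_near : forall y, dist Y (q (r y)) y <= C.

Lemma qi_dist_lower x x' : dist X x x' <= L * dist Y (q x) (q x') + L * C.
Proof.
  destruct (proj1 q_qi x x') as [Hlow _].
  assert (dist X x x' <= (dist Y (q x) (q x') + C) * L) by (apply Rle_div_l; lra).
  nra.
Qed.

Lemma qi_lipschitz : lipschitz X Y L (3 * L * C) q.
Proof. intros x x'. destruct (proj1 q_qi x x') as [_ Hup]. nra. Qed.

Lemma dist_qr_qr y y' : dist Y (q (r y)) (q (r y')) <= dist Y y y' + 2 * C.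
Proof.
  pose proof (dist_triangle Y (q (r y)) y (q (r y'))).
  pose proof (dist_triangle Y y y' (q (r y'))).
  rewrite (dist_sym Y y' (q (r y'))) in *.
  pose proof (qr_near y). pose proof (qr_near y'). lra.
Qed.

Lemma quasi_inverse_lipschitz : lipschitz Y X L (3 * L * C) r.
Proof.
  intros y y'. eapply Rle_trans; [apply qi_dist_lower|].
  pose proof (dist_qr_qr y y'). nra.
Qed.

Lemma quasi_inverse_retract x : dist X (r (q x)) x <= 3 * L * C.
Proof.
  eapply Rle_trans; [apply qi_dist_lower|].
  pose proof (qr_near (q x)). nra.
Qed.

Lemma haus_lt_img_quasi_inverse (A : X -> Prop) (B : Y -> Prop) M :
  haus_lt Y (img q A) B M -> haus_lt X (img r B) A (L * (M + 2 * C) + 1).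
Proof.
  intro H. apply haus_lt_of_near with (K := L * (M + 2 * C)); [| |lra].
  - intros x [b [Hb <-]].
    destruct (haus_lt_near_r Y _ _ _ H b Hb) as [y [[a [Ha <-]] Hd]].
    exists a; split; [exact Ha|].
    eapply Rle_trans; [apply qi_dist_lower|].
    pose proof (dist_triangle Y (q (r b)) b (q a)). pose proof (qr_near b). nra.
  - intros a Ha.
    destruct (haus_lt_near_l Y _ _ _ H (q a) (ex_intro _ a (conj Ha eq_refl)))
      as [b [Hb Hd]].
    exists (r b); split; [exists b; split; [exact Hb|reflexivity]|].
    eapply Rle_trans; [apply qi_dist_lower|].
    pose proof (dist_triangle Y (q a) b (q (r b))). pose proof (qr_near b).
    rewrite (dist_sym Y b) in *. nra.
Qed.

End QuasiInverse.

Lemma unique_relation_bijection {A B : Type} (Rel : A -> B -> Prop) :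
  (forall a, exists! b, Rel a b) -> (forall b, exists! a, Rel a b) ->
  exists (f : A -> B) (g : B -> A),
    (forall a, Rel a (f a)) /\ (forall b, Rel (g b) b) /\
    (forall a, g (f a) = a) /\ (forall b, f (g b) = b).
Proof.
  intros HA HB.
  destruct (choice Rel) as [f Hf].
  { intro a. destruct (HA a) as [b [Hb _]]. exists b; exact Hb. }
  destruct (choice (fun b a => Rel a b)) as [g Hg].
  { intro b. destruct (HB b) as [a [Ha _]]. exists a; exact Ha. }
  exists f, g. repeat split; auto.
  - intro a. destruct (HB (f a)) as [a0 [_ Hu]].
    transitivity a0; [symmetry; apply Hu, Hg|apply Hu, Hf].
  - intro b. destruct (HA (g b)) as [b0 [_ Hu]].
    transitivity b0; [symmetry; apply Hu, Hf|apply Hu, Hg].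
Qed.

Lemma strongly_qi_of_qdot_bijective (X Y : gpair) L C M (q : X -> Y) :
  good_consts L C M -> qi_pairs X Y L C M q ->
  (forall A, exists! B, qdot X Y M q A B) ->
  (forall B, exists! A, qdot X Y M q A B) ->
  strongly_qi X Y.
Proof.
  intros [HL [HC HM]] [q_qi _] HA HB.
  destruct (choice _ (proj2 q_qi)) as [r qr_near].
  destruct (unique_relation_bijection _ HA HB) as [f2 [r2 [Hf2 [Hr2 [rf2 fr2]]]]].
  assert (Hq : lip_map_pairs X Y L (3 * L * C) (L * (M + 2 * C) + 1) q f2).
  { split; [apply qi_lipschitz; assumption|].
    intro A. eapply haus_lt_weaken; [apply Hf2|nra]. }
  assert (Hr : lip_map_pairs Y X L (3 * L * C) (L * (M + 2 * C) + 1) r r2).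
  { split; [apply quasi_inverse_lipschitz with (q := q); assumption|].
    intro B. apply (haus_lt_img_quasi_inverse X Y L C q r); [assumption..|apply Hr2]. }
  exists L, (3 * L * C), (L * (M + 2 * C) + 1), q, f2.
  split; [repeat split; nra|].
  exists r, r2. split; repeat split; try apply Hq; try apply Hr; auto.
  - intro x. apply quasi_inverse_retract; assumption.
  - intro y. pose proof (qr_near y). nra.
Qed.

Lemma retraction_dist_lower (X Y : gpair) L C (f : X -> Y) (r : Y -> X) :
  lipschitz Y X L C r -> (forall x, dist X (r (f x)) x <= C) ->
  forall x x', dist X x x' <= L * dist Y (f x) (f x') + 3 * C.
Proof.
  intros r_lip rf_near x x'.
  pose proof (dist_triangle X x (r (f x)) x').
  pose proof (dist_triangle X (r (f x)) (r (f x')) x').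
  rewrite (dist_sym X x (r (f x))) in *.
  pose proof (r_lip (f x) (f x')). pose proof (rf_near x). pose proof (rf_near x'). lra.
Qed.

Lemma qi_pairs_of_strong_qi_pairs (X Y : gpair) L C M f1 f2 :
  good_consts L C M -> strong_qi_pairs X Y L C M f1 f2 -> qi_pairs X Y L (3 * C) M f1.
Proof.
  intros [HL [HC HM]] [r1 [r2 [[[f1_lip f2_haus] [[r1_lip _] [rf_near _]]]
                              [_ [_ [fr_near fr2]]]]]].
  split; [split|split].
  - intros x x'. split; [|pose proof (f1_lip x x'); lra].
    pose proof (retraction_dist_lower X Y L C f1 r1 r1_lip rf_near x x') as Hlow.
    assert (dist X x x' / L <= dist Y (f1 x) (f1 x') + 3 * C) by (apply Rle_div_l; nra).
    lra.
  - intro y. exists (r1 y). pose proof (fr_near y). lra.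
  - intro A. exists (f2 A). apply f2_haus.
  - intro B. exists (r2 B). unfold qdot. rewrite <- (fr2 B) at 2. apply f2_haus.
Qed.

Lemma qi_of_strongly_qi (X Y : gpair) : strongly_qi X Y -> qi X Y.
Proof.
  intros [L [C [M [f1 [f2 [[HL [HC HM]] Hstrong]]]]]].
  exists L, (3 * C), M, f1. split.
  - repeat split; lra.
  - apply (qi_pairs_of_strong_qi_pairs X Y L C M f1 f2); [repeat split|]; assumption.
Qed.

Theorem lemma2p6 (X Y : gpair) :
  (forall (L C M : R) (q : X -> Y),
     good_consts L C M -> qi_pairs X Y L C M q ->
     (forall A : cosets X, exists! B : cosets Y, qdot X Y M q A B) ->
     (forall B : cosets Y, exists! A : cosets X, qdot X Y M q A B) ->
     strongly_qi X Y) /\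
  (strongly_qi X Y -> qi X Y).
Proof.
  split.
  - exact (strongly_qi_of_qdot_bijective X Y).
  - exact (qi_of_strongly_qi X Y).
Qed.
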